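(* Let $q$ be a prime power, $k\geq 1$, and let $f,f'$ be linear Latin hypercubes of order $q$ and dimension $k$. Suppose there is a function $R:\mathbb{F}_q^3\to\mathbb{F}_q$ such that for every rectangle $(a,b,c,d)$ both $f(a)=R(f(b),f(c),f(d))$ and $f'(a)=R(f'(b),f'(c),f'(d))$ hold, and suppose $f(x)=f'(x)$ for every $x=(x_1,\dots,x_k)\in\mathbb{F}_q^k$ having at most one nonzero coordinate. Then $f=f'$. (That is, a linear Latin hypercube is uniquely determined by its rectangle function and its values at the points with at most one nonzero coordinate.)
   Context: A Latin hypercube of order $q$ and dimension $k$ is a function $f:\mathbb{F}_q^k\to\mathbb{F}_q$ such that fixing any $k-1$ arguments gives a bijection in the remaining argument. It is linear if there are permutations $\alpha_0,\dots,\alpha_k$ of $\mathbb{F}_q$ with $\alpha_0(f(x_1,\dots,x_k))=\alpha_1(x_1)+\cdots+\alpha_k(x_k)$ for all $x$. For distinct $i,j$, a rectangle of directions $i$ and $j$ is a quadruple $(a,b,c,d)$ in $\mathbb{F}_q^k$ with $a_i=b_i$, $c_i=d_i$, $b_j=c_j$, $d_j=a_j$, and $a_l=b_l=c_l=d_l$ for $l\notin\{i,j\}$. For a linear Latin hypercube $f$ (with $k\ge 2$), the rectangle function $\mathrm{Rect}_f$ is the unique $R$ with $f(a)=R(f(b),f(c),f(d))$ for all rectangles. *)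

From mathcomp Require Import all_boot all_order all_fingroup all_algebra.
Set Implicit Arguments. Unset Strict Implicit. Unset Printing Implicit Defensive.
Import GRing.Theory.
Local Open Scope ring_scope.

Definition upd (F : finFieldType) (k : nat) (x : {ffun 'I_k -> F}) (i : 'I_k) (t : F)
  : {ffun 'I_k -> F} := [ffun l => if l == i then t else x l].

Definition latin_hypercube (F : finFieldType) (k : nat) (f : {ffun 'I_k -> F} -> F) : Prop :=
  forall (i : 'I_k) (x : {ffun 'I_k -> F}), bijective (fun t : F => f (upd x i t)).

Definition linear_hypercube (F : finFieldType) (k : nat) (f : {ffun 'I_k -> F} -> F) : Prop :=
  exists (alpha0 : {perm F}) (alpha : 'I_k -> {perm F}),
    forall x : {ffun 'I_k -> F}, alpha0 (f x) = \sum_(i < k) alpha i (x i).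

Definition linear_latin_hypercube (F : finFieldType) (k : nat) (f : {ffun 'I_k -> F} -> F)
  : Prop := latin_hypercube f /\ linear_hypercube f.

Definition is_rectangle (F : finFieldType) (k : nat) (i j : 'I_k)
  (a b c d : {ffun 'I_k -> F}) : Prop :=
  [/\ i != j, a i = b i /\ c i = d i, b j = c j /\ d j = a j &
      forall l : 'I_k, l != i -> l != j -> [/\ a l = b l, b l = c l & c l = d l]].

Definition is_rect (F : finFieldType) (k : nat) (a b c d : {ffun 'I_k -> F}) : Prop :=
  exists i j : 'I_k, is_rectangle i j a b c d.

Definition at_most_one_nonzero (F : finFieldType) (k : nat) (x : {ffun 'I_k -> F}) : Prop :=
  (#|[set i | x i != 0%R]| <= 1)%N.

(** Induction on the number of nonzero coordinates. A point [x] with two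
    nonzero coordinates [i] and [j] is the corner of a rectangle whose other
    corners are [x] with coordinate [j], [i], or both set to zero; these have
    smaller support, so the rectangle relation transfers the equality [f = f']
    to [x]. *)

From mathcomp Require Import all_boot all_order all_fingroup all_algebra.

Import GRing.Theory.
Local Open Scope ring_scope.

Section RectangleDetermined.

Variables (F : finFieldType) (k : nat).
Implicit Types (x : {ffun 'I_k -> F}) (i j : 'I_k).

Definition supp x : {set 'I_k} := [set l | x l != 0].

Lemma supp_upd0_sub x i : supp (upd x i 0) \subset supp x.
Proof.
apply/subsetP => l; rewrite !inE ffunE.
by case: (l == i); rewrite ?eqxx.
Qed.

Lemma card_supp_upd0_lt x i : x i != 0 -> (#|supp (upd x i 0%R)| < #|supp x|)%N.
Proof.
move=> xi_neq0; apply: proper_card; rewrite properEneq supp_upd0_sub andbT.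
apply/eqP => supp_eq.
have : i \in supp (upd x i 0) by rewrite supp_eq inE.
by rewrite inE ffunE !eqxx.
Qed.

Lemma upd0_is_rectangle x i j : i != j ->
  is_rectangle i j x (upd x j 0) (upd (upd x i 0) j 0) (upd x i 0).
Proof.
move=> neq_ij; split => //.
- by rewrite !ffunE (negbTE neq_ij) eqxx.
- by rewrite !ffunE eqxx eq_sym (negbTE neq_ij).
- by move=> l /negbTE li /negbTE lj; rewrite !ffunE li lj.
Qed.

Variables (R : F -> F -> F -> F) (g g' : {ffun 'I_k -> F} -> F).
Hypothesis rect_g : forall a b c d, is_rect a b c d ->
  g a = R (g b) (g c) (g d) /\ g' a = R (g' b) (g' c) (g' d).
Hypothesis eq_supp_le1 : forall x, at_most_one_nonzero x -> g x = g' x.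

Lemma rect_determined x : g x = g' x.
Proof.
elim: #|supp x|.+1 {-2}x (ltnSn #|supp x|) => // n IH {}x supp_lt.
have [|supp_gt1] := leqP #|supp x| 1; first exact: eq_supp_le1.
have [i [j [xi_neq0 xj_neq0 neq_ij]]] := card_gt1P supp_gt1.
rewrite !inE in xi_neq0 xj_neq0.
have eq_smaller_supp y : (#|supp y| < #|supp x|)%N -> g y = g' y.
  by move=> lt_y; apply: IH; apply: leq_trans lt_y supp_lt.
have rect : is_rect x (upd x j 0) (upd (upd x i 0) j 0) (upd x i 0).
  by exists i, j; apply: upd0_is_rectangle.
have [-> ->] := rect_g _ _ _ _ rect.
have lt_i := card_supp_upd0_lt _ _ xi_neq0.
have lt_j := card_supp_upd0_lt _ _ xj_neq0.
have lt_ij := leq_ltn_trans (subset_leq_card (supp_upd0_sub _ j)) lt_i.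
by rewrite !eq_smaller_supp.
Qed.

End RectangleDetermined.

Theorem lemma2 (F : finFieldType) (k : nat) (hk : (1 <= k)%N)
  (f f' : {ffun 'I_k -> F} -> F)
  (hf : linear_latin_hypercube f) (hf' : linear_latin_hypercube f')
  (R : F -> F -> F -> F)
  (hR : forall a b c d : {ffun 'I_k -> F}, is_rect a b c d ->
          f a = R (f b) (f c) (f d) /\ f' a = R (f' b) (f' c) (f' d))
  (h1 : forall x : {ffun 'I_k -> F}, at_most_one_nonzero x -> f x = f' x) :
  forall x : {ffun 'I_k -> F}, f x = f' x.
Proof. exact: rect_determined hR h1. Qed.
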